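(* There is an absolute constant $c>0$ such that for every $n\ge1$, every $\epsilon\in(1/n,1]$, and every $\epsilon$-differentially private algorithm $M$ that takes a private edge set $E$ on a fixed vertex set $V$ with $|V|=n$ and outputs an orientation $M_E$ assigning to each unordered pair $\{u,v\}$ of distinct vertices one of its endpoints $M_E(\{u,v\})\in\{u,v\}$, there exists a graph $G=(V,E)$ with $E\neq\emptyset$ such that $\mathbb{E}\big[|\{M_E(e):e\in E\}|\big]\ge \frac{c}{\epsilon}\,\mathrm{OPT}(G)$.
   Context: $M$ is $\epsilon$-differentially private if for any two edge sets $E,E'$ on $V$ with symmetric difference of size one and any set $\mathcal{O}$ of outputs, $\Pr[M(E)\in\mathcal{O}]\le e^{\epsilon}\Pr[M(E')\in\mathcal{O}]$. The set $\{M_E(e):e\in E\}$ is a vertex cover of $G$; $\mathrm{OPT}(G)$ denotes the minimum size of a vertex cover of $G$. *)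

From Stdlib Require Import Reals.
From HB Require Import structures.
From mathcomp Require Import all_boot all_order all_algebra.
From mathcomp Require Import Rstruct.
Set Implicit Arguments. Unset Strict Implicit. Unset Printing Implicit Defensive.
Import Order.TTheory GRing.Theory Num.Theory.
Local Open Scope ring_scope.

(* Vertex set V = 'I_n.  An unordered pair {u,v} of distinct vertices is
   represented canonically as an ordered pair (u,v) with u < v. *)
Definition upair (n : nat) := {p : 'I_n * 'I_n | (p.1 < p.2)%N}.

Definition edgeset (n : nat) := {set upair n}.

(* An orientation assigns to each unordered pair one of its endpoints;
   encoded by a boolean: true = smaller endpoint, false = larger endpoint. *)
Definition orientation (n : nat) := {ffun upair n -> bool}.

Definition endpoint (n : nat) (e : upair n) (b : bool) : 'I_n :=
  if b then (val e).1 else (val e).2.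

Definition is_mechanism (n : nat) (M : edgeset n -> orientation n -> R) : Prop :=
  forall E : edgeset n,
    (forall o, (0 <= M E o)%R) /\ (\sum_(o : orientation n) M E o = 1)%R.

Definition prob (n : nat) (M : edgeset n -> orientation n -> R)
  (E : edgeset n) (O : {set orientation n}) : R :=
  (\sum_(o in O) M E o)%R.

Definition neighbours (n : nat) (E E' : edgeset n) : Prop :=
  #|(E :\: E') :|: (E' :\: E)| = 1%N.

Definition differentially_private (n : nat) (eps : R)
  (M : edgeset n -> orientation n -> R) : Prop :=
  forall (E E' : edgeset n), neighbours E E' ->
  forall O : {set orientation n}, (prob M E O <= exp eps * prob M E' O)%R.

Definition cover_of (n : nat) (E : edgeset n) (o : orientation n) : {set 'I_n} :=
  [set endpoint e (o e) | e in E].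

Definition expected_cover (n : nat) (M : edgeset n -> orientation n -> R)
  (E : edgeset n) : R :=
  (\sum_(o : orientation n) M E o * (#|cover_of E o|)%:R)%R.

Definition is_vertex_cover (n : nat) (E : edgeset n) (C : {set 'I_n}) : bool :=
  [forall e in E, ((val e).1 \in C) || ((val e).2 \in C)].

(* Minimum vertex cover size (setT is always a cover, of size n). *)
Definition OPT (n : nat) (E : edgeset n) : nat :=
  \big[minn/n]_(C : {set 'I_n} | is_vertex_cover E C) #|C|.

From Stdlib Require Import Reals.
From HB Require Import structures.
From mathcomp Require Import all_boot all_order all_algebra.
From mathcomp Require Import Rstruct.
From mathcomp Require Import zify ring lra.
Import Order.TTheory GRing.Theory Num.Theory.
Set Implicit Arguments. Unset Strict Implicit. Unset Printing Implicit Defensive.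
Local Open Scope ring_scope.

(* Take the smallest k with (k+1) eps > 1 and look at the complete graph K on
   the vertices 0..k together with its k+1 stars.  A star has a vertex cover of
   size one, and the output of M on a star contains one vertex per edge not
   oriented towards the centre.  Each star has at most k <= 1/eps edges, so by
   group privacy the probabilities computed on the empty graph are at most
   e^(k eps) <= 3 times those on any star.  On the empty graph every edge of K
   points away from one of its endpoints, i.e. away from the centre of one of
   the two stars containing it; summing, the expected covers of the stars add
   up to at least |K|/3, which is of order k^2 ~ k/eps.  Hence some star has
   expected cover of order 1/eps. *)

Section Stars.

Variable n : nat.
Implicit Types (v : 'I_n) (e : upair n) (E : edgeset n) (o : orientation n).

Definition incident v e : bool := ((val e).1 == v) || ((val e).2 == v).

Definition other v e : 'I_n := if (val e).1 == v then (val e).2 else (val e).1.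

Definition away_from v E o : edgeset n := [set e in E | endpoint e (o e) != v].

Lemma other_inj v e1 e2 :
  incident v e1 -> incident v e2 -> other v e1 = other v e2 -> e1 = e2.
Proof.
move=> inc1 inc2 eq_other; apply: val_inj; move: inc1 inc2 eq_other.
rewrite /incident /other; case: e1 e2 => [[a1 b1] /= lt1] [[a2 b2] /= lt2] /=.
move: lt1 lt2; case: (eqVneq a1 v) => [->|_]; case: (eqVneq a2 v) => [->|_] //=.
- by move=> _ _ _ _ ->.
- by move=> lt1 lt2 _ /eqP eq2 eq12; move: lt1 lt2; rewrite -eq2 -eq12; lia.
- by move=> lt1 lt2 /eqP eq1 _ eq12; move: lt1 lt2; rewrite -eq1 eq12; lia.
- by move=> _ _ /eqP -> /eqP -> ->.
Qed.

Lemma endpoint_other v e b :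
  incident v e -> endpoint e b != v -> endpoint e b = other v e.
Proof.
rewrite /incident /endpoint /other; case: e => [[a c] /= _].
case: b => /= [_ /negbTE -> //|].
by case: (a =P v) => [//|_] /= /eqP ->; rewrite eqxx.
Qed.

Lemma card_away_from_le_cover v E o :
  {in E, forall e, incident v e} -> (#|away_from v E o| <= #|cover_of E o|)%N.
Proof.
move=> incE; rewrite -(card_in_imset (f := fun e => endpoint e (o e))).
  apply/subset_leq_card/subsetP => x /imsetP[e]; rewrite inE => /andP[eE _] ->.
  exact: imset_f.
move=> e1 e2; rewrite !inE => /andP[e1E ne1] /andP[e2E ne2] eq12.
apply: (@other_inj v); rewrite ?incE //.
by rewrite -(endpoint_other (incE _ e1E) ne1) -(endpoint_other (incE _ e2E) ne2).
Qed.

Lemma OPT_le1 v E : {in E, forall e, incident v e} -> (OPT E <= 1)%N.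
Proof.
move=> incE; apply: (@leq_trans #|[set v]|); last by rewrite cards1.
have coverE : is_vertex_cover E [set v].
  by apply/forallP => e; apply/implyP => /incE; rewrite /incident !inE.
rewrite /OPT -minEnat.
exact: (@bigmin_le_cond _ nat _ n _ _ (fun C : {set 'I_n} => #|C|) coverE).
Qed.

End Stars.

Section Mechanisms.

Variables (n : nat) (M : edgeset n -> orientation n -> R).
Implicit Types (v : 'I_n) (E F : edgeset n).

Lemma sum_prob_card (P : upair n -> orientation n -> bool) E F :
  \sum_(e in F) prob M E [set o : orientation n | P e o] =
  \sum_(o : orientation n) M E o * (#|[set e in F | P e o]|)%:R.
Proof.
rewrite /prob; under eq_bigr => e _ do rewrite big_mkcond /=.
rewrite exchange_big /=; apply: eq_bigr => o _.
rewrite -big_mkcondr (eq_bigl [in [set e in F | P e o]]) => [|e]; last by rewrite !inE.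
by rewrite sumr_const mulr_natr.
Qed.

Hypothesis M_mech : is_mechanism M.

Lemma sum_prob_away_le_cover v E :
  {in E, forall e, incident v e} ->
  \sum_(e in E) prob M E [set o : orientation n | endpoint e (o e) != v] <= expected_cover M E.
Proof.
move=> incE; rewrite sum_prob_card /expected_cover; apply: ler_sum => o _.
have [M_ge0 _] := M_mech E.
by rewrite ler_wpM2l // ler_nat card_away_from_le_cover.
Qed.

Lemma expected_cover0 : expected_cover M set0 = 0.
Proof.
by rewrite /expected_cover big1 // => o _; rewrite /cover_of imset0 cards0 mulr0.
Qed.

End Mechanisms.

Lemma neighbours_setD1 (n : nat) (E : edgeset n) e : e \in E -> neighbours (E :\ e) E.
Proof.
move=> eE; rewrite /neighbours (_ : _ :|: _ = [set e]) ?cards1 //.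
apply/setP => x; rewrite !inE; case: (eqVneq x e) => [->|_] /=; first by rewrite eE.
by case: (x \in E).
Qed.

Lemma dp_group_privacy (n : nat) (eps : R) (M : edgeset n -> orientation n -> R)
    (A B : edgeset n) (O : {set orientation n}) :
  differentially_private eps M -> A \subset B ->
  prob M A O <= exp eps ^+ #|B :\: A| * prob M B O.
Proof.
move=> dp; have [m] := ubnP #|B :\: A|; elim: m B => // m IH B ltBm sAB.
have [BA0|/set0Pn[e BAe]] := eqVneq (B :\: A) set0.
  have -> : B = A by apply/eqP; rewrite eqEsubset sAB -setD_eq0 BA0 eqxx.
  by rewrite setDv cards0 expr0 mul1r.
move: (BAe); rewrite inE => /andP[eA eB].
have cardBA : #|B :\: A| = #|(B :\ e) :\: A|.+1.
  by rewrite (cardsD1 e) BAe setDDl setUC -setDDl.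
have sABe : A \subset B :\ e.
  by apply/subsetP => x xA; rewrite !inE (subsetP sAB) // andbT; apply: contraNneq eA => <-.
apply: (le_trans (IH _ _ sABe)); first by rewrite -ltnS -cardBA.
rewrite cardBA exprS [exp eps * _]mulrC -mulrA ler_wpM2l //.
  by apply: exprn_ge0; apply/RleP; apply: Rlt_le; apply: exp_pos.
exact: dp (neighbours_setD1 eB) O.
Qed.

Lemma exp_le_exp (x y : R) : x <= y -> exp x <= exp y.
Proof.
rewrite le_eqVlt => /predU1P[-> //|lt_xy].
by apply/RleP; apply: Rlt_le; apply: exp_increasing; apply/RltP.
Qed.

Lemma exp_pow_le3 (eps : R) (j : nat) : j%:R * eps <= 1 -> exp eps ^+ j <= 3.
Proof.
move=> le_jeps1; rewrite expRX -[eps *+ j]mulr_natl.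
apply: (le_trans (exp_le_exp le_jeps1)).
by rewrite -INRE INR_IZR_INZ; apply/RleP; exact: exp_le_3.
Qed.

Section Clique.

Variables (n k : nat).
Implicit Types (v : 'I_n) (e : upair n) (o : orientation n).

Definition clique_edges : edgeset n := [set e : upair n | ((val e).2 <= k)%N].

Definition star v : edgeset n := [set e in clique_edges | incident v e].

Lemma star_incident v : {in star v, forall e, incident v e}.
Proof. by move=> e; rewrite inE => /andP[]. Qed.

Lemma card_vertices_le : (#|[set u : 'I_n | (u <= k)%N]| <= k.+1)%N.
Proof.
rewrite -[k.+1]card_ord.
apply: (@leq_card_in _ _ (fun u : 'I_n => inord u : 'I_k.+1)) => u1 u2.
rewrite !inE => le1 le2 /(congr1 val); rewrite /= !inordK // => eq12.
exact: val_inj.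
Qed.

(* Half of the vertices 0..k against the other half gives m * (k + 1 - m)
   edges, with m = (k + 1) / 2. *)
Lemma card_clique : (k < n)%N -> (k * k.+1 <= 4 * #|clique_edges|)%N.
Proof.
move=> ltkn; set m := (k.+1 %/ 2)%N; set l := (k.+1 - m)%N.
have lt_a (a : 'I_m) : (a < n)%N by have := ltn_ord a; rewrite /m; lia.
have lt_b (b : 'I_l) : (m + b < n)%N by have := ltn_ord b; rewrite /l /m; lia.
have lt_ab (a : 'I_m) (b : 'I_l) : (Ordinal (lt_a a) < Ordinal (lt_b b))%N.
  by rewrite /=; have := ltn_ord a; lia.
pose f (p : 'I_m * 'I_l) : upair n :=
  exist _ (Ordinal (lt_a p.1), Ordinal (lt_b p.2)) (lt_ab p.1 p.2).
have f_inj : injective f.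
  move=> [a1 b1] [a2 b2] /(congr1 val) [eq_a eq_b].
  by congr pair; apply: val_inj => /=; lia.
apply: (@leq_trans (4 * (m * l))); first by rewrite /l /m; nia.
have <- : #|[set: 'I_m * 'I_l]| = (m * l)%N by rewrite cardsT card_prod !card_ord.
rewrite leq_mul2l -(card_imset _ f_inj).
apply/orP; right; apply/subset_leq_card/subsetP => x /imsetP[[a b] _ ->].
by rewrite inE /=; have := ltn_ord b; rewrite /l /m; lia.
Qed.

Lemma card_star v : (v <= k)%N -> (#|star v| <= k)%N.
Proof.
move=> le_vk; set S := [set u : 'I_n | (u <= k)%N].
have card_Sv : (#|S :\ v| <= k)%N.
  by move: card_vertices_le; rewrite (cardsD1 v) inE le_vk.
apply: leq_trans card_Sv.
rewrite -(card_in_imset (f := other v)); last first.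
  by move=> e1 e2 /star_incident inc1 /star_incident inc2; apply: other_inj.
apply/subset_leq_card/subsetP => x /imsetP[e ev ->].
have := star_incident ev; move: ev; rewrite !inE /incident /other.
case: e => [[a b] /= lt_ab] /= /andP[le_bk _] inc.
case: (a =P v) => [<-|/eqP ne_av]; first by rewrite neq_ltn lt_ab orbT.
by rewrite ne_av /=; move: lt_ab le_bk; lia.
Qed.

(* Every edge of the clique points away from the endpoint it does not choose,
   which is the centre of one of the stars containing it. *)
Lemma card_clique_le_sum_away o :
  (#|clique_edges| <= \sum_(v : 'I_n | (v <= k)%N) #|away_from v (star v) o|)%N.
Proof.
under eq_bigr => v _ do rewrite -sum1_card big_mkcond /=.
rewrite -sum1_card.
rewrite exchange_big /= big_mkcond /=; apply: leq_sum => e _.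
case: ifP => // eK.
have le_xk : (endpoint e (~~ o e) <= k)%N.
  by move: eK; rewrite inE /endpoint; case: e => [[a b] /= lt_ab]; case: (o _) => /=; lia.
set x := endpoint e (~~ o e).
rewrite (bigD1 x) //= /away_from /star !inE; rewrite inE in eK; rewrite eK /=.
have -> : incident x e by rewrite /incident /x /endpoint; case: (o e); rewrite eqxx ?orbT.
suff -> : endpoint e (o e) != x by [].
by rewrite /x /endpoint; case: e {eK x le_xk} => [[a b] /= lt_ab]; case: (o _);
  rewrite /= neq_ltn lt_ab ?orbT.
Qed.

End Clique.

Lemma exists_critical_size (n : nat) (eps : R) :
  (1 <= n)%N -> 1 / n%:R < eps -> eps <= 1 ->
  exists k : nat, [/\ (0 < k)%N, (k < n)%N, k%:R * eps <= 1 & 1 < k.+1%:R * eps].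
Proof.
move=> n_ge1 lt_inv_eps le_eps1.
have lt1_neps : 1 < n%:R * eps by move: lt_inv_eps; rewrite ltr_pdivrMr ?ltr0n // mulrC.
have ex_k : exists k : nat, 1 < k.+1%:R * eps by exists n.-1; rewrite prednK.
case: (ex_minnP ex_k) => k lt1_k k_min.
have k_gt0 : (0 < k)%N.
  by rewrite lt0n; apply: contraTneq lt1_k => ->; rewrite mul1r -leNgt.
exists k; split => //.
- by have := k_min n.-1; rewrite prednK // => /(_ lt1_neps); lia.
- rewrite leNgt; apply/negP => lt1_keps.
  by have := k_min k.-1; rewrite prednK // => /(_ lt1_keps); lia.
Qed.

Section HeavyStar.

Variables (n : nat) (eps : R) (M : edgeset n -> orientation n -> R).
Hypotheses (M_mech : is_mechanism M) (M_dp : differentially_private eps M).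
Variable k : nat.
Hypotheses (eps_gt0 : 0 < eps) (le_keps1 : k%:R * eps <= 1).

Lemma sum_prob0_away_le_cover (v : 'I_n) : (v <= k)%N ->
  \sum_(e in star k v) prob M set0 [set o : orientation n | endpoint e (o e) != v]
  <= 3 * expected_cover M (star k v).
Proof.
move=> le_vk.
have cover_ge := sum_prob_away_le_cover M_mech (@star_incident n k v).
apply: le_trans (ler_wpM2l (ler0n _ 3) cover_ge).
rewrite mulr_sumr; apply: ler_sum => e _.
apply: le_trans (dp_group_privacy _ M_dp (sub0set (star k v))) _.
rewrite setD0 ler_wpM2r //.
  by rewrite /prob; apply: sumr_ge0 => o _; case: (M_mech (star k v)).
apply: exp_pow_le3; apply: le_trans le_keps1.
by rewrite ler_pM2r // ler_nat card_star.
Qed.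

Lemma card_clique_le_sum_covers :
  #|clique_edges n k|%:R <= 3 * \sum_(v : 'I_n | (v <= k)%N) expected_cover M (star k v).
Proof.
have [M0_ge0 M0_sum1] := M_mech set0.
rewrite mulr_sumr; apply: le_trans (ler_sum _ (fun v => sum_prob0_away_le_cover (v := v))).
under eq_bigr => v _ do rewrite sum_prob_card.
rewrite exchange_big /= -[X in X <= _]mul1r -{1}M0_sum1 mulr_suml; apply: ler_sum => o _.
by rewrite -mulr_sumr -natr_sum ler_wpM2l // ler_nat card_clique_le_sum_away.
Qed.

Lemma exists_heavy_star : (0 < k)%N -> (k < n)%N -> 1 < k.+1%:R * eps ->
  exists2 v : 'I_n, (v <= k)%N & 1 / 24 / eps <= expected_cover M (star k v).
Proof.
move=> k_gt0 lt_kn lt1_k1eps.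
case: (boolP [exists v : 'I_n, (v <= k)%N && (1 / 24 / eps <= expected_cover M (star k v))]).
  by move=> /existsP[v /andP[le_vk heavy]]; exists v.
move=> /existsPn light; exfalso.
have sum_light : \sum_(v : 'I_n | (v <= k)%N) expected_cover M (star k v)
    <= k.+1%:R * (1 / 24 / eps).
  apply: (@le_trans _ _ (\sum_(v : 'I_n | (v <= k)%N) (1 / 24 / eps))).
    by apply: ler_sum => v le_vk; move: (light v); rewrite le_vk /= -ltNge => /ltW.
  have c_ge0 : 0 <= 1 / 24 / eps by apply: divr_ge0 (ltW eps_gt0); apply: divr_ge0.
  rewrite sumr_const -[X in X <= _]mulr_natl ler_wpM2r // ler_nat.
  by move: (card_vertices_le n k); rewrite cardsE.
have quad : k%:R * k.+1%:R <= 4 * #|clique_edges n k|%:R :> R.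
  by rewrite -!natrM ler_nat card_clique.
have := le_trans card_clique_le_sum_covers (ler_wpM2l (ler0n _ 3) sum_light).
move: quad lt1_k1eps; rewrite -natr1.
have k_ge1 : 1 <= k%:R :> R by rewrite ler1n.
set x := k%:R; set T := #|clique_edges n k|%:R => quad lt1 bound.
have Teps : T * eps <= (x + 1) / 8.
  have -> : (x + 1) / 8 = 3 * ((x + 1) * (1 / 24 / eps)) * eps by field; rewrite gt_eqF.
  by rewrite ler_pM2r.
have x_eps : x * eps <= 1 / 2.
  have : x * (x + 1) * eps <= (x + 1) / 2 by move: (ler_wpM2r (ltW eps_gt0) quad); lra.
  nra.
nra.
Qed.

End HeavyStar.

Theorem mainTheorem8 :
  exists c : R, (0 < c)%R /\
  forall (n : nat), (1 <= n)%N ->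
  forall (eps : R), (1 / n%:R < eps)%R -> (eps <= 1)%R ->
  forall (M : edgeset n -> orientation n -> R),
    is_mechanism M -> differentially_private eps M ->
    exists E : edgeset n, E != set0 /\
      (c / eps * (OPT E)%:R <= expected_cover M E)%R.
Proof.
exists (1 / 24); split; first lra.
move=> n n_ge1 eps lt_inv_eps le_eps1 M M_mech M_dp.
have eps_gt0 : 0 < eps by apply: lt_trans lt_inv_eps; rewrite divr_gt0 ?ltr0n.
have [k [k_gt0 lt_kn le_keps1 lt1_k1eps]] := exists_critical_size n_ge1 lt_inv_eps le_eps1.
have [v _ heavy] := exists_heavy_star M_mech M_dp eps_gt0 le_keps1 k_gt0 lt_kn lt1_k1eps.
have c_gt0 : 0 < 1 / 24 / eps by rewrite !divr_gt0.
exists (star k v); split.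
  by apply: contraTneq heavy => ->; rewrite expected_cover0 -ltNge.
apply: le_trans heavy; rewrite -[X in _ <= X]mulr1 ler_pM2l // lern1.
exact: OPT_le1 (@star_incident n k v).
Qed.
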